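(* Let $m\ge 3$ items be placed independently, each uniformly at random into one of three boxes, and let $a,b,c$ be the random numbers of items in the three boxes. Then $\mathbb{E}[\min\{a,b,c\}]\ge \frac{2}{27}m$. *)

(* Discrete uniform probability over all assignments
   f : 'I_m -> 'I_3 of m items to 3 boxes (each of the 3^m assignments
   equally likely, i.e. items placed independently and uniformly). *)
From mathcomp Require Import all_boot all_order all_algebra.
Set Implicit Arguments. Unset Strict Implicit. Unset Printing Implicit Defensive.
Import Order.TTheory GRing.Theory Num.Theory.

Definition load (m : nat) (f : {ffun 'I_m -> 'I_3}) (i : 'I_3) : nat :=
  #|[set j | f j == i]|.

Definition minload (m : nat) (f : {ffun 'I_m -> 'I_3}) : nat :=
  minn (load f (inord 0)) (minn (load f (inord 1)) (load f (inord 2))).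

Definition expected_min (m : nat) : rat :=
  ((\sum_(f : {ffun 'I_m -> 'I_3}) (minload f)%:R) / (3 ^ m)%:R)%R.

(** If the loads are a, b, c, then 4abc <= (m - 1)^2 min(a, b, c): when a
    is the minimum and a > 0 this is 4bc <= (b + c)^2 <= (m - 1)^2.  On the
    other hand, summing abc over the 3^m assignments counts, for each of the
    m(m-1)(m-2) ordered triples of distinct items, the 3^(m-3) assignments
    sending them to boxes 0, 1, 2, so E[abc] = m(m-1)(m-2)/27.  Hence
    E[min] >= 4m(m-2)/(27(m-1)) >= 2m/27, as m - 1 <= 2(m - 2). *)
From mathcomp Require Import all_boot all_order all_algebra.
From mathcomp Require Import zify ring.
Import Order.TTheory GRing.Theory Num.Theory.

Lemma four_prod_le_sqr_mull (a b c : nat) :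
  (4 * (a * b * c) <= (a + b + c - 1) ^ 2 * a)%N.
Proof.
case: a => [|a]; first by rewrite !mul0n.
have AMGM : (4 * (b * c) <= (b + c) ^ 2)%N.
  by have := (nat_Cauchy b c).1; rewrite sqrnD; lia.
have le_bc : ((b + c) ^ 2 <= (a.+1 + b + c - 1) ^ 2)%N by rewrite leq_exp2r //; lia.
rewrite [X in (X <= _)%N](_ : _ = 4 * (b * c) * a.+1)%N; last by ring.
exact: leq_mul (leq_trans AMGM le_bc) (leqnn _).
Qed.

Lemma four_prod_le_sqr_min (a b c : nat) :
  (4 * (a * b * c) <= (a + b + c - 1) ^ 2 * minn a (minn b c))%N.
Proof.
have [_ | _] := leqP a (minn b c); first exact: four_prod_le_sqr_mull.
have [_ | _] := leqP b c.
  by rewrite (addnC a) (mulnC a); apply: four_prod_le_sqr_mull.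
rewrite [a * b * c]mulnC [a + b + c]addnC [c * _]mulnA [c + _]addnA.
exact: four_prod_le_sqr_mull.
Qed.

Lemma sum_nat_of_bool (T : finType) (P : pred T) : (\sum_x (P x : nat))%N = #|P|.
Proof. by rewrite -sum1_card [RHS]big_mkcond. Qed.

Lemma sum_ffun_prod_eq (aT rT : finType) (A : {set aT}) (g : aT -> rT) :
  (\sum_(f : {ffun aT -> rT}) \prod_(x in A) (f x == g x : nat) = #|rT| ^ #|~: A|)%N.
Proof.
under eq_bigr do rewrite big_mkcond /=.
rewrite -(bigA_distr_bigA (fun x y => if x \in A then (y == g x : nat) else 1%N)).
rewrite -prod_nat_const [RHS]big_mkcond /=.
apply: eq_bigr => x _; rewrite inE; case: (x \in A) => /=.
  by rewrite (bigD1 (g x)) //= eqxx big1 // => y /negbTE ->.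
by rewrite sum1_card.
Qed.

Lemma sum_ffun_eq3 (aT rT : finType) (j0 j1 j2 : aT) (i0 i1 i2 : rT) :
  j0 != j1 -> j0 != j2 -> j1 != j2 ->
  (\sum_(f : {ffun aT -> rT}) ((f j0 == i0) * (f j1 == i1) * (f j2 == i2))
     = #|rT| ^ (#|aT| - 3))%N.
Proof.
move=> n01 n02 n12; pose g := [fun x => i2 with j0 |-> i0, j1 |-> i1] : aT -> rT.
have j0_notin : j0 \notin [set j1; j2] by rewrite !inE negb_or n01.
have j1_notin : j1 \notin [set j2] by rewrite inE.
have cardJ : #|j0 |: (j1 |: [set j2])| = 3.
  by rewrite cardsU1 j0_notin cardsU1 j1_notin cards1.
rewrite -cardJ -{1}(cardsC (j0 |: (j1 |: [set j2]))) addKn.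
rewrite -(@sum_ffun_prod_eq _ _ _ g).
apply: eq_bigr => f _; rewrite big_setU1 // big_setU1 // big_set1 /= mulnA /g /=.
by rewrite !eqxx !(eq_sym j1) !(eq_sym j2) (negbTE n01) (negbTE n02) (negbTE n12).
Qed.

Lemma sum_distinct_triples (T : finType) :
  (\sum_(j0 : T) \sum_(j1 : T) \sum_(j2 : T) [&& j0 != j1, j0 != j2 & j1 != j2]
     = #|T| * (#|T| - 1) * (#|T| - 2))%N.
Proof.
rewrite -mulnA -sum_nat_const; apply: eq_bigr => j0 _.
transitivity (\sum_(j1 : T) (j0 != j1) * (#|T| - 2))%N.
  apply: eq_bigr => j1 _; have [<- | n01] := eqVneq j0 j1; first by rewrite big1.
  rewrite sum_nat_of_bool -(cardsC [set j0; j1]) cards2 n01 addKn.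
  by rewrite /= mul1n; apply: eq_card => j2; rewrite !inE negb_or !(eq_sym j2).
rewrite -big_distrl /= sum_nat_of_bool -(cardsC [set j0]) cards1 addKn.
by congr (_ * _); apply: eq_card => j1; rewrite !inE eq_sym.
Qed.

Lemma loadE m (f : {ffun 'I_m -> 'I_3}) i : load f i = (\sum_j (f j == i))%N.
Proof. by rewrite /load sum_nat_of_bool; apply: eq_card => j; rewrite inE. Qed.

Lemma prod_loadsE m (f : {ffun 'I_m -> 'I_3}) (i0 i1 i2 : 'I_3) :
  (load f i0 * load f i1 * load f i2
     = \sum_j0 \sum_j1 \sum_j2 ((f j0 == i0) * (f j1 == i1) * (f j2 == i2)))%N.
Proof.
rewrite !loadE -mulnA big_distrl; apply: eq_bigr => j0 _.
rewrite big_distrl big_distrr; apply: eq_bigr => j1 _.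
by rewrite /= mulnA big_distrr.
Qed.

Lemma eq_mul_eq0 (T : eqType) (x a b : T) : a != b -> ((x == a) * (x == b) = 0)%N.
Proof. by move=> nab; have [-> | //] := eqVneq x a; rewrite (negbTE nab) muln0. Qed.

Lemma sum_prod_loads m (i0 i1 i2 : 'I_3) :
  i0 != i1 -> i0 != i2 -> i1 != i2 ->
  (\sum_(f : {ffun 'I_m -> 'I_3}) load f i0 * load f i1 * load f i2
     = m * (m - 1) * (m - 2) * 3 ^ (m - 3))%N.
Proof.
move=> n01 n02 n12.
under eq_bigr do rewrite prod_loadsE.
have := sum_distinct_triples 'I_m; rewrite card_ord => <-.
rewrite exchange_big big_distrl; apply: eq_bigr => j0 _.
rewrite exchange_big big_distrl; apply: eq_bigr => j1 _.
rewrite exchange_big big_distrl; apply: eq_bigr => j2 _ /=.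
have [<- | m01] := eqVneq j0 j1; first by rewrite big1 // => f _; rewrite eq_mul_eq0.
have [<- | m02] := eqVneq j0 j2.
  by rewrite big1 // => f _; rewrite mulnAC eq_mul_eq0.
have [<- | m12] := eqVneq j1 j2.
  by rewrite big1 // => f _; rewrite -mulnA eq_mul_eq0 ?muln0.
by rewrite mul1n sum_ffun_eq3 // !card_ord.
Qed.

Lemma inord3_partition (x : 'I_3) :
  ((x == inord 0) + (x == inord 1) + (x == inord 2) = 1)%N.
Proof. by case: x => [[|[|[|n]]] lt_n3] //; rewrite -!val_eqE /= !inordK. Qed.

Lemma sum_loads m (f : {ffun 'I_m -> 'I_3}) :
  (load f (inord 0) + load f (inord 1) + load f (inord 2) = m)%N.
Proof.
rewrite !loadE -!big_split /= (eq_bigr (fun=> 1%N)) => [|j _].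
  by rewrite sum1_card card_ord.
exact: inord3_partition.
Qed.

Lemma sum_minload_ge m : (3 <= m)%N ->
  (2 * m * 3 ^ (m - 3) <= \sum_(f : {ffun 'I_m -> 'I_3}) minload f)%N.
Proof.
move=> m_ge3; set S := (\sum_f minload f)%N.
have inord_neq (k l : nat) :
    (k < 3)%N -> (l < 3)%N -> k != l -> (inord k : 'I_3) != inord l.
  by move=> k3 l3 kl; rewrite -val_eqE /= !inordK.
have prod_le : (4 * (m * (m - 1) * (m - 2) * 3 ^ (m - 3)) <= (m - 1) ^ 2 * S)%N.
  rewrite -(@sum_prod_loads m (inord 0) (inord 1) (inord 2)) ?inord_neq //.
  rewrite !big_distrr /=; apply: leq_sum => f _.
  by rewrite -[in X in (_ <= X ^ 2 * _)%N](sum_loads _ f); apply: four_prod_le_sqr_min.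
have arith : ((m - 1) ^ 2 * (2 * m) <= 4 * (m * (m - 1) * (m - 2)))%N by nia.
rewrite -(@leq_pmul2l ((m - 1) ^ 2)) ?expn_gt0 ?subn_gt0 ?(ltnW m_ge3) //.
apply: leq_trans prod_le.
by rewrite [X in (X <= _)%N]mulnA [X in (_ <= X)%N]mulnA leq_mul2r arith orbT.
Qed.

Theorem lemma3 (m : nat) (hm : (3 <= m)%N) :
  ((2%:R / 27%:R) * m%:R <= expected_min m :> rat)%R.
Proof.
rewrite /expected_min -natr_sum ler_pdivlMr; last by rewrite ltr0n expn_gt0.
have -> : (3 ^ m = 3 ^ 3 * 3 ^ (m - 3))%N by rewrite -expnD subnKC.
have -> : (2%:R / 27%:R * m%:R * (3 ^ 3 * 3 ^ (m - 3))%:R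
            = (2 * m * 3 ^ (m - 3))%:R :> rat)%R by rewrite !natrM natrX; field.
by rewrite ler_nat sum_minload_ge.
Qed.
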